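(* Let $h\ge-1$ be an integer and $n\ge0$, excluding the case $(n,h)=(0,-1)$. The number of partitions $\lambda\vdash n$ having an $h$-fixed hook arising from a part of size $1$ equals the number of partitions of $n$ in which the part $1$ occurs exactly $h+1$ times. Equivalently, the generating function of the former is $q^{h+1}/(q^2;q)_\infty$ for $h\ge0$ and $1/(q^2;q)_\infty-1$ for $h=-1$.
   Context: A partition $\lambda=(\lambda_1\ge\cdots\ge\lambda_t>0)$ of $n$ has first-column hook lengths $h_{s,1}(\lambda)=\lambda_s+(t-s)$. An $h$-fixed hook arising from a part of size $k$ is an index $s$ with $h_{s,1}(\lambda)=s+h$ and $\lambda_s=k$. Notation: $(a;q)_\infty=\prod_{j\ge0}(1-aq^j)$. *)

From mathcomp Require Import all_boot all_order all_algebra ssrint.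
Set Implicit Arguments. Unset Strict Implicit. Unset Printing Implicit Defensive.
Import Order.TTheory GRing.Theory Num.Theory.

Definition is_partition (n : nat) (lam : seq nat) : bool :=
  [&& sorted geq lam, all (fun x => 0 < x) lam & sumn lam == n].

(* Partitions of n are encoded bijectively by nonincreasing n-tuples with
   entries in [0..n] and sum n (the partition padded with zeros). *)
Definition tuple_code (n : nat) (t : n.-tuple 'I_n.+1) : bool :=
  sorted geq (map val t) && (sumn (map val t) == n).

Definition part_of_code (n : nat) (t : n.-tuple 'I_n.+1) : seq nat :=
  filter (fun x => 0 < x) (map val t).

(* First-column hook length h_{s,1}(lam) = lam_s + (t - s), s 1-indexed,
   t = number of parts. *)
Definition hook1 (lam : seq nat) (s : nat) : nat :=
  nth 0 lam s.-1 + (size lam - s).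

Definition has_fixed_hook (h : int) (k : nat) (lam : seq nat) : bool :=
  has (fun s => (Posz (hook1 lam s) == (Posz s + h)%R) && (nth 0 lam s.-1 == k))
      (iota 1 (size lam)).

Definition card_partitions_with (n : nat) (P : seq nat -> bool) : nat :=
  #|[set t : n.-tuple 'I_n.+1 | tuple_code t && P (part_of_code t)]|.

From mathcomp Require Import all_boot all_order all_algebra ssrint zify.
Import Order.TTheory GRing.Theory Num.Theory.

(* Write a partition as [nu ++ nseq m 1], nu its parts >= 2.  A part 1 can
   only sit in the block of ones, and there the index [size nu + i] has first
   column hook [m - i + 1]; so (for a nonempty partition) an h-fixed hook
   from a part 1 exists iff [m - size nu - (h + 1)] is a nonnegative even
   number [2 j].  Raising every
   part of nu by one (spending [size nu] ones) and gluing the remaining [2 j]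
   spare ones into [j] twos leaves exactly [h + 1] ones; lowering the parts
   >= 3 and splitting the twos inverts this. *)

Lemma geq_trans : transitive geq.
Proof. by move=> y x z /= le_yx le_zy; apply: leq_trans le_zy le_yx. Qed.

Lemma sorted_geq_cat (s t : seq nat) :
  sorted geq (s ++ t) = [&& allrel geq s t, sorted geq s & sorted geq t].
Proof. by rewrite !(sorted_pairwise geq_trans) pairwise_cat. Qed.

Lemma sorted_geq_nseq m x : sorted geq (nseq m x).
Proof. by case: m => //= m; elim: m => //= m ->; rewrite leqnn. Qed.

Lemma sorted_geq_cat_bound k (s t : seq nat) :
  all (fun x => k <= x) s -> all (fun y => y <= k) t ->
  sorted geq s -> sorted geq t -> sorted geq (s ++ t).
Proof.
move=> /allP s_ge /allP t_le s_sorted t_sorted.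
rewrite sorted_geq_cat s_sorted t_sorted !andbT.
by apply/allrelP => x y /s_ge le_kx /t_le le_yk; apply: leq_trans le_yk le_kx.
Qed.

Definition parts_gt k (l : seq nat) := filter (fun x => k < x) l.

Lemma sorted_geq_filter_split k (s : seq nat) : sorted geq s ->
  parts_gt k s ++ filter (fun x => x <= k) s = s.
Proof.
move=> s_sorted; apply: (sorted_eq geq_trans) => //.
- by move=> x y /andP[le_yx le_xy]; apply/anti_leq/andP.
- apply: (sorted_geq_cat_bound k); rewrite ?(sorted_filter geq_trans) ?filter_all //.
  by apply/allP => x; rewrite mem_filter => /andP[/ltnW].
- rewrite (@eq_filter _ (fun x => x <= k) (predC (fun x => k < x))); last first.
    by move=> x; rewrite /= leqNgt.
  by apply/permPl/perm_filterC.
Qed.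

Lemma filter_pred1_nseq (x : nat) s : filter (pred1 x) s = nseq (count_mem x s) x.
Proof. by rewrite -size_filter; apply/all_pred1P; apply: filter_all. Qed.

Lemma sorted_geq_split_zeros (s : seq nat) : sorted geq s ->
  parts_gt 0 s ++ nseq (count_mem 0 s) 0 = s.
Proof.
move=> /(sorted_geq_filter_split 0) split_s; rewrite -[RHS]split_s; congr (_ ++ _).
by rewrite -filter_pred1_nseq; apply: eq_filter => x /=; lia.
Qed.

Lemma sumn_map_succ s : sumn (map S s) = sumn s + size s.
Proof. by elim: s => //= x s ->; lia. Qed.

Lemma sumn_map_pred s : all (fun x => 0 < x) s -> sumn (map predn s) + size s = sumn s.
Proof. by elim: s => //= x s IH /andP[x_pos /IH]; lia. Qed.

Lemma leq_sumn_mem x s : x \in s -> x <= sumn s.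
Proof. by elim: s => //= y s IH; rewrite inE => /orP[/eqP ->|/IH]; lia. Qed.

Lemma size_leq_sumn s : all (fun x => 0 < x) s -> size s <= sumn s.
Proof. by elim: s => //= x s IH /andP[x_pos /IH]; lia. Qed.

Section PartitionBlocks.

Variable l : seq nat.
Hypotheses (l_sorted : sorted geq l) (l_pos : all (fun x => 0 < x) l).

Let filter_low_pred1 k (a : pred nat) :
  {in l, forall x, a x && (x <= k) = (x == k)} ->
  filter a (filter (fun x => x <= k) l) = nseq (count_mem k l) k.
Proof.
by move=> eq_a; rewrite -filter_predI -filter_pred1_nseq; apply: eq_in_filter.
Qed.

Lemma partition_split_ones :
  parts_gt 1 l ++ nseq (count_mem 1 l) 1 = l.
Proof.
rewrite -[RHS](sorted_geq_filter_split 1 _ l_sorted); congr (_ ++ _).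
rewrite -(filter_low_pred1 1 predT) ?filter_predT //.
by move=> x /(allP l_pos) /=; lia.
Qed.

Lemma partition_split_twos :
  parts_gt 2 l ++ nseq (count_mem 2 l) 2 ++ nseq (count_mem 1 l) 1 = l.
Proof.
rewrite -[RHS](sorted_geq_filter_split 2 _ l_sorted); congr (_ ++ _).
have low_sorted : sorted geq (filter (fun x => x <= 2) l).
  exact: sorted_filter geq_trans _ _ l_sorted.
rewrite -[RHS](sorted_geq_filter_split 1 _ low_sorted); congr (_ ++ _).
  by rewrite /parts_gt filter_low_pred1 // => x /(allP l_pos) /=; lia.
rewrite -filter_predI -filter_pred1_nseq.
by apply: eq_in_filter => x /(allP l_pos) /=; lia.
Qed.

End PartitionBlocks.

Lemma is_partition_cat_nseq n k s m : 0 < k ->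
  all (fun x => k <= x) s -> sorted geq s -> sumn s + k * m = n ->
  is_partition n (s ++ nseq m k).
Proof.
move=> k_pos s_ge s_sorted sum_n; apply/and3P; split.
- by apply: (sorted_geq_cat_bound k); rewrite ?all_nseq ?leqnn ?orbT ?sorted_geq_nseq.
- rewrite all_cat all_nseq k_pos orbT andbT.
  by apply: sub_all s_ge => x /=; lia.
- by rewrite sumn_cat sumn_nseq -sum_n.
Qed.

Lemma nth_cat_nseq_one_eq1 (nu : seq nat) m i :
  all (fun x => 1 < x) nu -> i < size nu + m ->
  (nth 0 (nu ++ nseq m 1) i == 1) = (size nu <= i).
Proof.
move=> nu_gt1 lt_i; rewrite nth_cat; case: ltnP => [lt_i_nu | le_nu_i].
  by have := allP nu_gt1 _ (mem_nth 0 lt_i_nu); case: (nth _ _ _) => [|[]].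
by rewrite nth_nseq ifT //; lia.
Qed.

Lemma has_fixed_hook_one_cat (e : nat) nu m :
  all (fun x => 1 < x) nu -> 0 < size nu + m + e ->
  has_fixed_hook (Posz e - 1) 1 (nu ++ nseq m 1)
  = (size nu + e <= m) && ~~ odd (m - (size nu + e)).
Proof.
move=> nu_gt1 nontrivial; rewrite /has_fixed_hook /hook1 size_cat size_nseq.
apply/hasP/andP => [[s] | [le_m even_spare]].
  rewrite mem_iota => /andP[s_pos le_s] /andP[/eqP hook_s is_one].
  have le_nu_s : size nu <= s.-1 by rewrite -(nth_cat_nseq_one_eq1 _ m _ nu_gt1) //; lia.
  move: hook_s; rewrite (eqP is_one) => hook_s.
  have -> : m - (size nu + e) = (s.-1 - size nu).*2 by rewrite -muln2; lia.
  by rewrite odd_double; split => //; lia.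
set d := m - (size nu + e).
have d_even : d = (d./2).*2.
  by have := odd_double_half d; rewrite (negbTE even_spare) add0n.
move: d_even; rewrite -muln2 /d => d_even.
have is_one : nth 0 (nu ++ nseq m 1) (size nu + d./2) == 1.
  by rewrite nth_cat_nseq_one_eq1 ?leq_addr //; lia.
exists (size nu + d./2).+1; first by rewrite mem_iota; lia.
by rewrite /= (eqP is_one) eqxx andbT; apply/eqP; lia.
Qed.

Section FixedHookOnesBijection.

Variable e : nat.

Definition even_spare_ones (l : seq nat) : bool :=
  (size (parts_gt 1 l) + e <= count_mem 1 l)
  && ~~ odd (count_mem 1 l - (size (parts_gt 1 l) + e)).

Definition fixed_hook_to_ones (l : seq nat) : seq nat :=
  map S (parts_gt 1 l)
  ++ nseq (count_mem 1 l - (size (parts_gt 1 l) + e))./2 2 ++ nseq e 1.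

Definition ones_to_fixed_hook (l : seq nat) : seq nat :=
  map predn (parts_gt 2 l)
  ++ nseq (size (parts_gt 2 l) + e + (count_mem 2 l).*2) 1.

Lemma fixed_hook_to_ones_spec n l : is_partition n l -> even_spare_ones l ->
  [/\ is_partition n (fixed_hook_to_ones l), count_mem 1 (fixed_hook_to_ones l) == e
    & ones_to_fixed_hook (fixed_hook_to_ones l) = l].
Proof.
move=> /and3P[l_sorted l_pos /eqP sum_l] /andP[le_spare even_spare].
have split_l := partition_split_ones _ l_sorted l_pos.
rewrite /fixed_hook_to_ones; move: split_l le_spare even_spare.
set nu := parts_gt 1 l; set m := count_mem 1 l => split_l le_spare even_spare.
set j := (m - (size nu + e))./2.
have m_eq : m = size nu + e + j.*2.
  by have := odd_double_half (m - (size nu + e)); rewrite (negbTE even_spare); lia.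
have nu_gt1 : all (fun x => 1 < x) nu := filter_all _ _.
have Snu_gt2 : all (fun x => 2 < x) (map S nu) by rewrite all_map.
have Snu_no1 : count_mem 1 (map S nu) = 0.
  by apply/count_memPn/negP => /mapP[x /(allP nu_gt1) /=]; lia.
have Snu_no2 : count_mem 2 (map S nu) = 0.
  by apply/count_memPn/negP => /mapP[x /(allP nu_gt1) /=]; lia.
split.
- rewrite catA; apply: is_partition_cat_nseq => //.
  + rewrite all_cat all_nseq orbT andbT.
    by apply: sub_all Snu_gt2 => x /=; lia.
  + apply: (sorted_geq_cat_bound 2); rewrite ?all_nseq ?leqnn ?orbT ?sorted_geq_nseq //.
      by apply: sub_all Snu_gt2 => x /ltnW.
    rewrite sorted_map; apply: sub_sorted (sorted_filter geq_trans _ l_sorted).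
    by move=> x y /=; lia.
  + rewrite sumn_cat sumn_nseq sumn_map_succ -sum_l -split_l sumn_cat sumn_nseq.
    lia.
- by rewrite !count_cat !count_nseq Snu_no1 /=; lia.
- rewrite /ones_to_fixed_hook /parts_gt !filter_cat !filter_nseq /= cats0.
  rewrite (all_filterP Snu_gt2) !count_cat !count_nseq Snu_no2 /= (mapK succnK).
  by rewrite size_map -[RHS]split_l; congr (_ ++ nseq _ _); lia.
Qed.

Lemma ones_to_fixed_hook_spec n l : is_partition n l -> count_mem 1 l == e ->
  [/\ is_partition n (ones_to_fixed_hook l), even_spare_ones (ones_to_fixed_hook l)
    & fixed_hook_to_ones (ones_to_fixed_hook l) = l].
Proof.
move=> /and3P[l_sorted l_pos /eqP sum_l] /eqP ones_l.
have split_l := partition_split_twos _ l_sorted l_pos.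
rewrite ones_l /ones_to_fixed_hook in split_l *; move: split_l.
set rho := parts_gt 2 l; set c := count_mem 2 l => split_l.
have rho_gt2 : all (fun x => 2 < x) rho := filter_all _ _.
have Prho_gt1 : all (fun x => 1 < x) (map predn rho).
  by rewrite all_map; apply: sub_all rho_gt2 => x /=; lia.
set m := size rho + e + c.*2.
have parts_gt1_eq : parts_gt 1 (map predn rho ++ nseq m 1) = map predn rho.
  by rewrite /parts_gt filter_cat filter_nseq /= cats0; apply/all_filterP.
have ones_eq : count_mem 1 (map predn rho ++ nseq m 1) = m.
  rewrite count_cat count_nseq /= mul1n.
  by rewrite (count_memPn _) //; apply/negP => /(allP Prho_gt1).
have spare_eq : m - (size (map predn rho) + e) = c.*2 by rewrite size_map addKn.
split.
- apply: is_partition_cat_nseq => //.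
  + by apply: sub_all Prho_gt1 => x /ltnW.
  + apply: homo_sorted (sorted_filter geq_trans _ l_sorted) => x y /=; lia.
  + rewrite -sum_l -[in RHS]split_l !sumn_cat !sumn_nseq.
    have rho_pos : all (fun x => 0 < x) rho by apply: sub_all rho_gt2 => x /=; lia.
    by have := sumn_map_pred _ rho_pos; lia.
- by rewrite /even_spare_ones parts_gt1_eq ones_eq spare_eq size_map leq_addr odd_double.
- rewrite /fixed_hook_to_ones parts_gt1_eq ones_eq spare_eq doubleK -map_comp.
  rewrite (map_id_in (s := rho)) ?split_l // => x /(allP rho_gt2) /=; lia.
Qed.

End FixedHookOnesBijection.

Section PartitionCodes.

Variable n : nat.

Definition code_of_partition (l : seq nat) : n.-tuple 'I_n.+1 :=
  insubd (nseq_tuple n ord0) (map (@inord n) (take n (l ++ nseq n 0))).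

Lemma code_of_partitionE l : is_partition n l ->
  map val (code_of_partition l) = l ++ nseq (n - size l) 0.
Proof.
move=> /and3P[_ l_pos /eqP sum_l].
have size_l : size l <= n by rewrite -sum_l size_leq_sumn.
have take_l : take n (l ++ nseq n 0) = l ++ nseq (n - size l) 0.
  by rewrite take_cat ltnNge size_l /= take_nseq ?leq_subr.
rewrite /code_of_partition val_insubd size_map take_l size_cat size_nseq subnKC //.
rewrite eqxx -map_comp; apply: map_id_in => x /=.
rewrite mem_cat => /orP[/leq_sumn_mem|/nseqP[-> _]]; last exact: inordK.
by rewrite sum_l => le_xn; apply: inordK.
Qed.

Lemma code_of_partitionK l : is_partition n l -> part_of_code (code_of_partition l) = l.
Proof.
move=> l_part; rewrite /part_of_code code_of_partitionE // filter_cat filter_nseq /= cats0.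
by apply/all_filterP; case/and3P: l_part.
Qed.

Lemma tuple_code_of_partition l : is_partition n l -> tuple_code (code_of_partition l).
Proof.
move=> l_part; rewrite /tuple_code code_of_partitionE //.
case/and3P: l_part => l_sorted l_pos sum_l.
rewrite sumn_cat sumn_nseq mul0n addn0 sum_l andbT.
by apply: (sorted_geq_cat_bound 0); rewrite ?sorted_geq_nseq ?all_nseq ?orbT //; apply/allP.
Qed.

Lemma part_of_code_partition {t : n.-tuple 'I_n.+1} :
  tuple_code t -> is_partition n (part_of_code t).
Proof.
case/andP=> t_sorted /eqP sum_t; apply/and3P; split; last 1 first.
- have := congr1 sumn (sorted_geq_split_zeros _ t_sorted).
  by rewrite sumn_cat sumn_nseq addn0 sum_t => ->.
- exact: sorted_filter geq_trans _ _ t_sorted.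
- exact: filter_all.
Qed.

Lemma part_of_codeK {t : n.-tuple 'I_n.+1} :
  tuple_code t -> code_of_partition (part_of_code t) = t.
Proof.
move=> t_code; apply/val_inj/(inj_map val_inj).
rewrite code_of_partitionE ?part_of_code_partition //.
case/andP: t_code => t_sorted _; rewrite -[RHS](sorted_geq_split_zeros _ t_sorted).
congr (_ ++ nseq _ _); have := congr1 size (sorted_geq_split_zeros _ t_sorted).
by rewrite size_cat size_nseq size_map size_tuple /part_of_code /parts_gt; lia.
Qed.

Lemma eq_card_partitions_with (P Q : seq nat -> bool) :
  (forall l, is_partition n l -> P l = Q l) ->
  card_partitions_with n P = card_partitions_with n Q.
Proof.
move=> eq_PQ; apply: eq_card => t; rewrite !inE.
by case: (boolP (tuple_code t)) => //= t_code; apply/eq_PQ/part_of_code_partition.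
Qed.

Lemma leq_card_partitions_with {P Q : seq nat -> bool} {f g} :
  (forall l, is_partition n l -> P l ->
     [/\ is_partition n (f l), Q (f l) & g (f l) = l]) ->
  card_partitions_with n P <= card_partitions_with n Q.
Proof.
move=> f_spec; rewrite /card_partitions_with; set A := [set t | _].
pose F (t : n.-tuple 'I_n.+1) := code_of_partition (f (part_of_code t)).
have F_inj : {in A &, injective F}.
  move=> t1 t2; rewrite !inE => /andP[code1 P1] /andP[code2 P2] /(congr1 (@part_of_code n)).
  have [f1_part _ gf1] := f_spec _ (part_of_code_partition code1) P1.
  have [f2_part _ gf2] := f_spec _ (part_of_code_partition code2) P2.
  rewrite !code_of_partitionK // => /(congr1 g); rewrite gf1 gf2 => eq_part.
  by rewrite -(part_of_codeK code1) -(part_of_codeK code2) eq_part.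
rewrite -(card_in_imset F_inj).
apply/subset_leq_card/subsetP => _ /imsetP[t + ->]; rewrite !inE => /andP[t_code Pt].
have [f_part Qf _] := f_spec _ (part_of_code_partition t_code) Pt.
by rewrite tuple_code_of_partition // code_of_partitionK.
Qed.

Lemma card_partitions_with_bij {P Q : seq nat -> bool} {f g} :
  (forall l, is_partition n l -> P l ->
     [/\ is_partition n (f l), Q (f l) & g (f l) = l]) ->
  (forall l, is_partition n l -> Q l ->
     [/\ is_partition n (g l), P (g l) & f (g l) = l]) ->
  card_partitions_with n P = card_partitions_with n Q.
Proof.
move=> f_spec g_spec; apply/eqP; rewrite eqn_leq.
by rewrite (leq_card_partitions_with f_spec) (leq_card_partitions_with g_spec).
Qed.

End PartitionCodes.

Theorem theorem3p2 (h : int) (n : nat) :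
  (-1 <= h)%R -> ~ (n = 0%N /\ h = (-1)%R) ->
  card_partitions_with n (has_fixed_hook h 1)
  = card_partitions_with n (fun lam => Posz (count_mem 1%N lam) == (h + 1)%R).
Proof.
move=> h_ge nontrivial.
have [e h_eq] : exists e : nat, h = (Posz e - 1)%R.
  by case: h h_ge {nontrivial} => k; [exists k.+1 | exists 0]; lia.
have n_or_e : 0 < n + e by case: n e nontrivial h_eq => [|?] [|?] //=; lia.
subst h; rewrite (@eq_card_partitions_with _ _ (even_spare_ones e)); last first.
  move=> l /and3P[l_sorted l_pos /eqP sum_l].
  have split_l := partition_split_ones _ l_sorted l_pos.
  rewrite -[in LHS]split_l has_fixed_hook_one_cat //; first exact: filter_all.
  have := congr1 size split_l; rewrite size_cat size_nseq => ->.
  by move: sum_l; case: (l) => [|x l'] /=; lia.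
rewrite [RHS](@eq_card_partitions_with _ _ (fun l => count_mem 1 l == e)).
  exact: card_partitions_with_bij (fixed_hook_to_ones_spec e n) (ones_to_fixed_hook_spec e n).
by move=> l _; apply/eqP/eqP; lia.
Qed.
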